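(* Let $K$ be a perfect field of characteristic $p>0$, let $R=K[x]$, and let $\mathcal{D}$ be the ring of $K$-linear differential operators on $R$. Let $M=R\oplus R$ be the $\mathcal{D}$-module defined as in the context with $g_r=x^{p^r+p^{2r}}$ for all $r\geq 0$. Then $M$ is not holonomic.
   Context: Differential operators: for $t\geq 0$ let $\partial_t=D_t:R\to R$ be the $K$-linear map sending $x^v$ to $\binom{v}{t}x^{v-t}$ (so $\partial_0$ is the identity). The ring $\mathcal{D}$ of $K$-linear differential operators on $R=K[x]$ has $K$-basis $\{x^i\partial_t : i,t\geq 0\}$, and as a $K$-algebra it is generated by $x$ and the operators $\partial_{p^k}$, $k\geq 0$. The Bernstein filtration $\mathcal{F}_0\subset\mathcal{F}_1\subset\cdots$ of $\mathcal{D}$ is given by $\mathcal{F}_s=$ the $K$-span of $\{x^i\partial_t : i+t\leq s\}$. A $K$-filtration of a (left) $\mathcal{D}$-module $N$ is an ascending chain of $K$-subspaces $N_0\subset N_1\subset\cdots$ with $\bigcup_i N_i=N$ and $\mathcal{F}_iN_j\subset N_{i+j}$ for all $i,j$. A $\mathcal{D}$-module $N$ is holonomic if it has a $K$-filtration $\{N_i\}$ and a constant $C$ with $\dim_K N_i\leq C i$ for all $i$ (this is the definition with $n=1$ variable). The module: given elements $g_r\in R^{p^r}=K[x^{p^r}]$ ($r\geq 0$), put $\sigma_k=-\sum_{r=0}^k g_r$. Let $M^{(i)}$ be the free $R^{p^i}$-module on $s_1^{(i)},s_2^{(i)}$ and $\Theta_i:M^{(i+1)}\to M^{(i)}$ the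 $R^{p^{i+1}}$-linear map with $\Theta_i(s_1^{(i+1)})=s_1^{(i)}$, $\Theta_i(s_2^{(i+1)})=g_is_1^{(i)}+s_2^{(i)}$. The induced maps give $R$-module isomorphisms $R\otimes_{R^{p^s}}M^{(s)}\cong M^{(0)}$, and the natural action of $\mathrm{End}_{R^{p^s}}(R)$ (the operators of order $<p^s$) on $R\otimes_{R^{p^s}}M^{(s)}$ transfers to $M^{(0)}$; these actions are compatible and give $M=M^{(0)}=R\oplus R$ a $\mathcal{D}$-module structure. Concretely, $x$ acts coordinatewise and for all $k\geq 0$ and $f_1,f_2\in R$, $\partial_{p^k}(f_1,f_2)=\big(\partial_{p^k}f_1+(\partial_{p^k}\sigma_k)f_2,\ \partial_{p^k}f_2\big)$. *)

From HB Require Import structures.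
From mathcomp Require Import all_boot all_order all_algebra.
Set Implicit Arguments. Unset Strict Implicit. Unset Printing Implicit Defensive.
Import GRing.Theory.
Local Open Scope ring_scope.

Section Dmod.
Variable K : fieldType.

Definition Mod := ({poly K} * {poly K})%type.

(* Hasse derivative partial_t : x^v |-> binom(v,t) x^(v-t); this is
   mathcomp's  f^`N(t)  (coefficients (f^`N(t))_i = f_(i+t) * 'C(i+t, t)). *)
Definition hasse (t : nat) (f : {poly K}) : {poly K} := f^`N(t).

Definition gpoly (p r : nat) : {poly K} := 'X^(p ^ r + p ^ (2 * r)).

Definition sigma (p k : nat) : {poly K} := - \sum_(r < k.+1) gpoly p r.

(* Action of partial_t on M, obtained from the identification
   M ~ R (x)_{R^{p^s}} M^(s) (with t < p^s).  Using
   s = t+1 (t < p^(t+1)), the image of s_2^(s) in M^(0) is (-sigma_t, 1), and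
   partial_t (f1, f2) = ( partial_t f1 + partial_t(sigma_t f2) - sigma_t partial_t f2,
                          partial_t f2 ). *)
Definition dact (p t : nat) (m : Mod) : Mod :=
  let s := sigma p t in
  (hasse t m.1 + (hasse t (s * m.2) - s * hasse t m.2), hasse t m.2).

Definition xact (a : nat) (m : Mod) : Mod := ('X^a * m.1, 'X^a * m.2).

Definition opact (p a t : nat) (m : Mod) : Mod := xact a (dact p t m).

Definition ksubspace (N : Mod -> Prop) : Prop :=
  N 0 /\ forall (c : K) (u v : Mod), N u -> N v -> N (c *: u + v).

Definition dim_le (N : Mod -> Prop) (d : nat) : Prop :=
  exists s : seq Mod, (size s <= d)%N /\
    forall v, N v -> exists c : 'I_(size s) -> K, v = \sum_(i < size s) c i *: s`_i.

(* K-filtration of the D-module M (Bernstein filtration: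
   F_i = K-span of x^a partial_t with a + t <= i). *)
Definition kfiltration (p : nat) (N : nat -> Mod -> Prop) : Prop :=
  [/\ forall i, ksubspace (N i),
      forall i m, N i m -> N i.+1 m,
      forall m, exists i, N i m &
      forall i j a t, (a + t <= i)%N -> forall m, N j m -> N (i + j)%N (opact p a t m)].

Definition holonomic (p : nat) : Prop :=
  exists N : nat -> Mod -> Prop, kfiltration p N /\
    exists C : nat, forall i, dim_le (N i) (C * i)%N.

End Dmod.

From mathcomp Require Import all_boot all_order all_algebra ring zify.
Import GRing.Theory.

(* In characteristic p, (1 + X)^(p^r + p^(2r)) = (1 + X^(p^r)) (1 + X^(p^(2r))), so
   the Hasse derivative of order p^k kills g_r for r > k and sends g_k to x^(p^(2k)).
   Hence the first coordinate of x^a d_(p^k) (0, 1) = x^a d_(p^k) sigma_(p^k) is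
   -x^(p^(2k) + a) plus terms of lower degree.  Choosing M <= k < 2M and a < W := p^(2M)
   gives M W such vectors, all in filtration level 2W + j0 if (0, 1) lies in level j0,
   and their leading degrees are pairwise distinct, so they are linearly independent.
   Level 2W + j0 thus has dimension at least M W, which beats the linear bound
   C (2W + j0) as soon as M > 2C + C j0. *)

Section Staircase.
Variables (p M : nat).
Hypothesis p_gt1 : 1 < p.
Local Notation W := (p ^ (2 * M)).

Definition stair_exp (l : nat) : nat := M + l %/ W.
Definition stair_degree (l : nat) : nat := p ^ (2 * stair_exp l) + l %% W.

Let W_gt0 : 0 < W. Proof. by rewrite expn_gt0 ltnW. Qed.

Lemma stair_degree_increasing (l j : nat) : l < j -> stair_degree l < stair_degree j.
Proof.
move=> lt_lj; rewrite /stair_degree /stair_exp.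
have := leq_div2r W (ltnW lt_lj); rewrite leq_eqVlt => /orP[/eqP eq_q|lt_q].
  rewrite eq_q ltn_add2l.
  by move: lt_lj; rewrite {1}(divn_eq l W) {1}(divn_eq j W) eq_q ltn_add2l.
set A := p ^ (2 * (M + l %/ W)).
have le_W : W <= A by rewrite leq_exp2l // leq_mul2l leq_addr orbT.
have le_2A : 2 * A <= A * p ^ 2.
  have p2_ge2 : 2 <= p ^ 2 by rewrite (leq_trans p_gt1) // -{1}(expn1 p) leq_exp2l.
  by rewrite mulnC leq_mul2l p2_ge2 orbT.
have le_Ap2 : A * p ^ 2 <= p ^ (2 * (M + j %/ W)).
  by rewrite -expnD leq_exp2l // -mulnSr leq_mul2l -addnS leq_add2l lt_q orbT.
rewrite (leq_trans _ (leq_addr _ _)) // (leq_trans _ le_Ap2) // (leq_trans _ le_2A) //.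
by rewrite [2 * A]mul2n -addnn ltn_add2l (leq_trans (ltn_pmod l W_gt0)).
Qed.

Lemma stair_order_le (l : nat) : l < M * W -> p ^ stair_exp l <= W.
Proof.
move=> lt_l; rewrite /stair_exp leq_exp2l //.
have lt_q : l %/ W < M by rewrite ltn_divLR // mulnC.
by rewrite [X in _ <= X]mul2n -addnn leq_add2l ltnW.
Qed.

End Staircase.

Local Open Scope ring_scope.

Lemma coef_XaddC1_exp (R : nzRingType) (n t : nat) :
  (('X + 1 : {poly R}) ^+ n)`_t = 'C(n, t)%:R.
Proof.
rewrite exprD1n coef_sum.
under eq_bigr => i _ do rewrite coefMn coefXn.
case: (ltnP t n.+1) => [lt_tn|ge_tn]; last first.
  rewrite bin_small // big1 // => i _.
  by rewrite gtn_eqF ?mul0rn // (leq_trans (ltn_ord i)).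
rewrite (bigD1 (Ordinal lt_tn)) //= eqxx big1 ?addr0 // => i.
by rewrite -val_eqE eq_sym /= => /negbTE ->; rewrite mul0rn.
Qed.

Lemma pchar_binomial_add_pexp (R : comNzRingType) (p i j t : nat) :
  p \in [pchar R] ->
  'C(p ^ i + p ^ j, t)%N%:R = (t == 0)%:R + (t == p ^ i)%N%:R + (t == p ^ j)%N%:R
                            + (t == p ^ i + p ^ j)%N%:R :> R.
Proof.
move=> pR; have pRX : p \in [pchar {poly R}] by rewrite pchar_poly.
have pnat_pexp n : [pchar {poly R}].-nat (p ^ n)%N.
  by rewrite pnatX pnatE ?(pcharf_prime pR) // pRX.
rewrite -coef_XaddC1_exp exprD !(exprDn_pchar _ _ (pnat_pexp _)) !expr1n.
rewrite mulrDl !mulrDr mul1r mulr1 -exprD mulr1 !coefD !coefXn coef1; ring.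
Qed.

Section HasseOfSigma.
Variables (K : fieldType) (p : nat).
Hypothesis pK : p \in [pchar K].

Let p_gt1 : (1 < p)%N. Proof. exact/prime_gt1/(pcharf_prime pK). Qed.

Lemma coef_hasse_gpoly_high (k r j : nat) : (0 < k)%N -> (p ^ (2 * k) <= j)%N ->
  (hasse (p ^ k) (gpoly K p r))`_j = ((r == k) && (j == p ^ (2 * k)))%N%:R.
Proof.
move=> k_gt0 hj; rewrite /hasse /gpoly coef_nderivn coefXn.
have pk_gt0 : (0 < p ^ k)%N by rewrite expn_gt0 ltnW.
have lt_pk_p2k : (p ^ k < p ^ (2 * k))%N by rewrite ltn_exp2l //; lia.
case: eqP => [def_j|ne_j]; last first.
  case: (r =P k) => [r_k|_]; last by rewrite mul0rn.
  case: (j =P _) => [j_p2k|_]; last by rewrite mul0rn.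
  by case: ne_j; rewrite r_k j_p2k.
rewrite mulr1n def_j pchar_binomial_add_pexp //.
case: (ltngtP r k) => [lt_rk|lt_kr|r_k].
- have := ltn_exp2l r k p_gt1; have := ltn_exp2l (2 * r) (2 * k) p_gt1.
  rewrite lt_rk ltn_mul2l /=; lia.
- have lt_pk_pr : (p ^ k < p ^ r)%N by rewrite ltn_exp2l.
  have lt_pk_p2r : (p ^ k < p ^ (2 * r))%N by rewrite ltn_exp2l //; lia.
  by rewrite (gtn_eqF pk_gt0) (ltn_eqF lt_pk_pr) (ltn_eqF lt_pk_p2r)
             (ltn_eqF (ltn_addr _ lt_pk_pr)) !addr0.
- subst r; have lt_pk_ek : (p ^ k < p ^ k + p ^ (2 * k))%N by lia.
  rewrite (gtn_eqF pk_gt0) (ltn_eqF lt_pk_p2k) (ltn_eqF lt_pk_ek).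
  by rewrite (addnI def_j) !eqxx add0r !addr0.
Qed.

Lemma coef_hasse_sigma_high (k j : nat) : (0 < k)%N -> (p ^ (2 * k) <= j)%N ->
  (hasse (p ^ k) (sigma K p (p ^ k)))`_j = - (j == p ^ (2 * k))%N%:R.
Proof.
move=> k_gt0 hj; rewrite /sigma /hasse nderivnN raddf_sum coefN coef_sum.
under eq_bigr => r _ do rewrite -/(hasse _ _) coef_hasse_gpoly_high //.
have lt_k_pk : (k < (p ^ k).+1)%N by rewrite ltnS ltnW // ltn_expl.
rewrite (bigD1 (Ordinal lt_k_pk)) //= eqxx big1 ?addr0 // => r.
by rewrite -val_eqE /= => /negbTE ->.
Qed.

Lemma opact_e2_fst (a t : nat) : (0 < t)%N ->
  (opact p a t ((0, 1) : Mod K)).1 = 'X^a * hasse t (sigma K p t).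
Proof.
move=> t_gt0; have d_1 : (1 : {poly K})^`N(t) = 0 by rewrite nderivn_poly0 ?size_poly1.
rewrite /opact /xact /dact /hasse /= nderivn_poly0 ?size_poly0 //.
by rewrite d_1 mulr0 mulr1 subr0 add0r.
Qed.

Lemma coef_opact_e2_high (k a q : nat) : (0 < k)%N -> (p ^ (2 * k) + a <= q)%N ->
  (opact p a (p ^ k) ((0, 1) : Mod K)).1`_q = - (q == p ^ (2 * k) + a)%N%:R.
Proof.
move=> k_gt0 hq; have pk_gt0 : (0 < p ^ k)%N by rewrite expn_gt0 ltnW.
rewrite opact_e2_fst // coefXnM.
have -> : (q < a)%N = false by lia.
rewrite coef_hasse_sigma_high //; last by lia.
by congr (- (_ %:R)); apply/eqP/eqP; lia.
Qed.

End HasseOfSigma.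

Lemma triangular_size_le_span (K : fieldType) (m n : nat)
    (f : 'I_m -> {poly K}) (g : 'I_n -> {poly K}) (d : 'I_m -> nat) :
  (forall l, (f l)`_(d l) != 0) ->
  (forall l j : 'I_m, (l < j)%N -> (f l)`_(d j) = 0) ->
  (forall l, exists c : 'I_n -> K, f l = \sum_i c i *: g i) ->
  (m <= n)%N.
Proof.
move=> f_diag f_trig f_span.
pose A := \matrix_(l, j) (f l)`_(d j).
pose B := \matrix_(i, j) (g i)`_(d j).
have A_unit : A \in unitmx.
  have A_trig : is_trig_mx A by apply/is_trig_mxP => l j lt_lj; rewrite mxE f_trig.
  rewrite unitmxE det_trig // unitfE; apply/prodf_neq0 => l _; rewrite mxE.
  exact: f_diag.
have sAB : (A <= B)%MS.
  apply/row_subP => l; have [c def_fl] := f_span l; apply/submxP.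
  exists (\row_i c i); apply/rowP => j.
  rewrite !mxE def_fl coef_sum; apply: eq_bigr => i _.
  by rewrite !mxE coefZ.
by rewrite -(mxrank_unit A_unit) (leq_trans (mxrankS sAB) (rank_leq_row B)).
Qed.

Theorem mainTheorem1 (K : fieldType) (p : nat) :
  prime p -> p \in [pchar K] ->
  (forall a : K, exists b : K, b ^+ p = a) ->
  ~ holonomic K p.
Proof.
move=> p_prime pK _ [N [[_ _ N_exh N_act] [C N_dim]]].
have p_gt1 := prime_gt1 p_prime.
have [j0 e2_N] := N_exh ((0, 1) : Mod K).
set M := (2 * C + C * j0 + 1)%N; set W := (p ^ (2 * M))%N; set n := (2 * W + j0)%N.
have W_gt0 : (0 < W)%N by rewrite expn_gt0 ltnW.
have [s [size_s s_span]] := N_dim n.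
pose v (l : 'I_(M * W)) := opact p (l %% W) (p ^ stair_exp p M l) ((0, 1) : Mod K).
have v_N l : N n (v l).
  apply: N_act e2_N; rewrite [(2 * W)%N]mul2n -addnn leq_add //.
    exact: ltnW (ltn_pmod _ W_gt0).
  exact: stair_order_le _ _ p_gt1 _ (ltn_ord l).
have stair_exp_gt0 l : (0 < stair_exp p M l)%N by rewrite /stair_exp /M addn1.
have lt_dim : (C * n < M * W)%N by rewrite /n /M; move: W_gt0; clearbody W; nia.
suff : (M * W <= size s)%N by rewrite leqNgt (leq_ltn_trans size_s lt_dim).
apply: (@triangular_size_le_span K _ _ (fun l => (v l).1) (fun i => (s`_i).1)
          (fun l => stair_degree p M l)) => [l | l j lt_lj | l].
- by rewrite coef_opact_e2_high // eqxx oppr_eq0 oner_eq0.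
- rewrite coef_opact_e2_high //; last exact/ltnW/(stair_degree_increasing _ _ p_gt1).
  by rewrite gtn_eqF ?oppr0 // (stair_degree_increasing _ _ p_gt1).
- have [c ->] := s_span _ (v_N l); exists c.
  by rewrite linear_sum; apply: eq_bigr => i _; rewrite linearZ.
Qed.
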